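(* Let $(x_n)_{n\in\mathbb{Z}^{\geq 0}}$ be a sequence of real numbers satisfying $x_{n+1} = x_n x_{n-1} - x_{n-2}$ for all $n\geq 2$. If there exists some $N\in\mathbb{Z}^{\geq0}$ such that $$2<|x_N|, \quad |x_N|<|x_{N+1}|, \quad |x_{N+1}|<|x_{N+2}|,$$ then $|x_n|>2$ for all $n\geq N$ and $|x_n|\to\infty$ as $n\to\infty$.
   Context: The initial values $x_0,x_1,x_2$ are arbitrary real numbers, and all subsequent terms are determined by the recursion. *)

From Stdlib Require Import Reals.
From Coquelicot Require Import Coquelicot.

(* With u_n = |x_n|, the reverse triangle inequality gives
   u_(n+3) >= u_(n+2) u_(n+1) - u_n, so while u_(n+1) >= 2 the increment
   u_(n+3) - u_(n+2) is at least u_(n+2) - u_n, the sum of the two previous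
   increments.  Hence every increment from N on is at least the smaller one
   of the first two, d > 0: the sequence increases, stays above 2, and
   u_(N+k) >= u_N + k d. *)

From Stdlib Require Import Reals Lra Lia Psatz.
From Coquelicot Require Import Coquelicot.
Open Scope R_scope.

Lemma Rabs_mult_sub_ge (a b c : R) : Rabs c * Rabs b - Rabs a <= Rabs (c * b - a).
Proof. rewrite <- Rabs_mult. apply Rabs_triang_inv. Qed.

Lemma gap_le_increment (a b c y : R) :
  2 <= b -> 0 <= c -> c * b - a <= y -> c - a <= y - c.
Proof. intros; nra. Qed.

Lemma is_lim_seq_p_infty_of_linear_minorant (u : nat -> R) (a d : R) :
  0 < d -> (forall k, a + d * INR k <= u k) -> is_lim_seq u p_infty.
Proof.
  intros Hd Hu.
  apply (is_lim_seq_le_p_loc (fun k => a + d * INR k)).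
  { exists 0%nat; auto. }
  eapply is_lim_seq_plus.
  - apply is_lim_seq_const.
  - apply (is_lim_seq_scal_l INR d p_infty), is_lim_seq_INR.
  - simpl.
    destruct (Rle_dec 0 d) as [Hd0|]; [destruct (Rle_lt_or_eq_dec 0 d Hd0)|]; try lra.
    reflexivity.
Qed.

Section SuperadditiveIncrements.

Variable u : nat -> R.
Hypothesis u_rec : forall n, u (S (S n)) * u (S n) - u n <= u (S (S (S n))).

Definition increments_ge (d : R) (n : nat) : Prop :=
  2 < u n /\ d <= u (S n) - u n /\ d <= u (S (S n)) - u (S n).

Lemma increments_ge_S (d : R) (n : nat) :
  0 < d -> increments_ge d n -> increments_ge d (S n).
Proof.
  intros Hd (Hn & H01 & H12).
  assert (Hgap : u (S (S n)) - u n <= u (S (S (S n))) - u (S (S n)))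
    by (apply (gap_le_increment _ (u (S n))); [lra | lra | apply u_rec]).
  unfold increments_ge; lra.
Qed.

Lemma increments_ge_add (d : R) (N : nat) :
  0 < d -> increments_ge d N -> forall k, increments_ge d (k + N).
Proof.
  intros Hd HN k; induction k as [|k IH]; [exact HN|].
  exact (increments_ge_S d (k + N) Hd IH).
Qed.

Lemma linear_minorant_of_increments_ge (d : R) (N : nat) :
  0 < d -> increments_ge d N -> forall k, u N + d * INR k <= u (k + N).
Proof.
  intros Hd HN k; induction k as [|k IH]; [simpl; lra|].
  destruct (increments_ge_add d N Hd HN k) as (_ & Hk & _).
  rewrite S_INR; simpl; lra.
Qed.

End SuperadditiveIncrements.

Theorem lemma1 (x : nat -> R)
  (hrec : forall n : nat, (2 <= n)%nat -> x (S n) = x n * x (n - 1)%nat - x (n - 2)%nat)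
  (N : nat)
  (h1 : 2 < Rabs (x N))
  (h2 : Rabs (x N) < Rabs (x (S N)))
  (h3 : Rabs (x (S N)) < Rabs (x (S (S N)))) :
  (forall n : nat, (N <= n)%nat -> 2 < Rabs (x n)) /\
  is_lim_seq (fun n => Rabs (x n)) p_infty.
Proof.
  set (u := fun n => Rabs (x n)).
  assert (u_rec : forall n, u (S (S n)) * u (S n) - u n <= u (S (S (S n)))).
  { intros n; unfold u; rewrite (hrec (S (S n))) by lia.
    simpl Nat.sub; rewrite Nat.sub_0_r.
    apply Rabs_mult_sub_ge. }
  set (d := Rmin (u (S N) - u N) (u (S (S N)) - u (S N))).
  assert (Hd : 0 < d) by (apply Rmin_glb_lt; unfold u; lra).
  assert (HN : increments_ge u d N).
  { unfold increments_ge, d; repeat split; [exact h1|apply Rmin_l|apply Rmin_r]. }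
  split.
  - intros n Hn.
    replace n with ((n - N) + N)%nat by lia.
    exact (proj1 (increments_ge_add u u_rec d N Hd HN (n - N))).
  - apply (is_lim_seq_incr_n _ N).
    apply (is_lim_seq_p_infty_of_linear_minorant _ (u N) d Hd).
    exact (linear_minorant_of_increments_ge u u_rec d N Hd HN).
Qed.
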